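(* Let $L$ be a regular pseudocomplemented de Morgan algebra with dual $pm$-space $P$, and let $n<\omega$. Then $L$ is of range $n$ if and only if $P$ is of $\zeta$-width $n$.
   Context: A $pm$-algebra is $(L;\wedge,\vee,{}^\ast,{}^\prime,0,1)$ with bounded distributive lattice reduct, pseudocomplement ${}^\ast$ and de Morgan involution ${}^\prime$; it is regular if any two congruences sharing a class are equal. With $x^{0(\prime\ast)}=x$, $x^{(k+1)(\prime\ast)}=((x^{k(\prime\ast)})')^\ast$, $L$ is of range $n$ if $(x\wedge x^{\prime\ast})^{n(\prime\ast)}=(x\wedge x^{\prime\ast})^{(n+1)(\prime\ast)}$ for all $x\in L$. The dual $pm$-space $(P;\tau,\le,\zeta)$ is the Priestley space of prime ideals with order-reversing involution $\zeta(I)=\{a:a'\notin I\}$. $\ell(x,y)$ is the comparability-graph distance in $(P;\le)$ ($0$ if $x=y$, $\infty$ if not connected); $\ell_\zeta(x,y)=\min\{\ell(x,y),\ell(x,\zeta(y))\}$. $P$ is of $\zeta$-width $n$ if for all $x,y\in P$ with $\ell_\zeta(x,y)$ finite one has $\ell_\zeta(x,y)\le n$. *)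

From HB Require Import structures.
From mathcomp Require Import all_boot all_order.
Set Implicit Arguments. Unset Strict Implicit. Unset Printing Implicit Defensive.
Import Order.TTheory.
Local Open Scope order_scope.

Section PMAlgebra.
Context {disp : Order.disp_t} {L : tbDistrLatticeType disp}.

Definition is_pm_algebra (star neg : L -> L) : Prop :=
  (forall x y : L, x `&` y = \bot <-> y <= star x) /\
  (forall x y : L, neg (x `&` y) = neg x `|` neg y) /\
  (forall x : L, neg (neg x) = x).

Definition pm_congruence (star neg : L -> L) (th : L -> L -> Prop) : Prop :=
  (forall x, th x x) /\ (forall x y, th x y -> th y x) /\
  (forall x y z, th x y -> th y z -> th x z) /\
  (forall x y u v, th x y -> th u v -> th (x `&` u) (y `&` v)) /\
  (forall x y u v, th x y -> th u v -> th (x `|` u) (y `|` v)) /\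
  (forall x y, th x y -> th (star x) (star y)) /\
  (forall x y, th x y -> th (neg x) (neg y)).

Definition pm_regular (star neg : L -> L) : Prop :=
  forall th1 th2, pm_congruence star neg th1 -> pm_congruence star neg th2 ->
    (exists a, forall b, th1 a b <-> th2 a b) ->
    forall x y, th1 x y <-> th2 x y.

Definition negstar (star neg : L -> L) (x : L) : L := star (neg x).

Definition pm_range (star neg : L -> L) (n : nat) : Prop :=
  forall x : L,
    iter n (negstar star neg) (x `&` negstar star neg x)
    = iter n.+1 (negstar star neg) (x `&` negstar star neg x).

(* prime ideals (points of the dual pm-space), as predicates on L *)
Definition prime_ideal (I : L -> Prop) : Prop :=
  I \bot /\ ~ I \top /\
  (forall x y, I y -> x <= y -> I x) /\
  (forall x y, I x -> I y -> I (x `|` y)) /\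
  (forall x y, I (x `&` y) -> I x \/ I y).

Definition zeta (neg : L -> L) (I : L -> Prop) : L -> Prop :=
  fun a => ~ I (neg a).

Definition same_pt (I J : L -> Prop) : Prop := forall a, I a <-> J a.

Definition comparable_pt (I J : L -> Prop) : Prop :=
  (forall a, I a -> J a) \/ (forall a, J a -> I a).

(* walk k I J  <->  l(I,J) <= k in the comparability graph of P *)
Fixpoint walk (k : nat) (I J : L -> Prop) : Prop :=
  match k with
  | 0 => same_pt I J
  | k'.+1 => walk k' I J \/
             exists K, prime_ideal K /\ walk k' I K /\ comparable_pt K J
  end.

Definition lzeta_le (neg : L -> L) (k : nat) (I J : L -> Prop) : Prop :=
  walk k I J \/ walk k I (zeta neg J).

Definition zeta_width (neg : L -> L) (n : nat) : Prop :=
  forall I J, prime_ideal I -> prime_ideal J ->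
    (exists k, lzeta_le neg k I J) -> lzeta_le neg n I J.

End PMAlgebra.

From HB Require Import structures.
From mathcomp Require Import all_boot all_order.
From mathcomp Require Import boolp classical_sets.
Set Implicit Arguments. Unset Strict Implicit. Unset Printing Implicit Defensive.
Import Order.TTheory.
Local Open Scope order_scope.

(* Let f x := (x')^* and core x := x `&` f x.  Since f is monotone with f (f x) <= x, the
   iterates f^k (core x) decrease, and L has range n exactly when they are constant from
   k = n on.  For prime ideals, zeta I ⊆ K forces f to map K into I; conversely the prime
   ideal theorem turns f D ⊆ I, for D directed, into a prime K containing D with zeta I ⊆ K.
   Chains I = M_0, ..., M_m of primes with zeta M_i ⊆ M_(i+1) give f^m M_m ⊆ I, and they
   convert into zeta-walks and back with the length changing by at most one.
   If the iterates at x do not stabilise at n, a prime I separating f^n (core x) from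
   f^(n+1) (core x) starts such a chain of length at most n+2 ending at a prime containing
   x, and zeta-width n would shorten it enough to put f^n (core x) into I.  Conversely,
   regularity gives x `&` (f x)' <= y `|` y^*, which forbids chains of three primes;
   so each point or its zeta-image is maximal, and between maximal endpoints the stable
   iterates produce a chain, hence a zeta-walk, of length at most n. *)

Local Notation "I ⊆ J" := (forall a, I a -> J a) (at level 70, no associativity).

(** * Prime ideals of a bounded distributive lattice *)

Section LatticeIdeals.
Context {disp : Order.disp_t} {L : tbDistrLatticeType disp}.
Implicit Types (D I J K M N P X Y : L -> Prop) (a c x y : L).

Definition lattice_ideal X : Prop :=
  [/\ X \bot, forall x y, X y -> x <= y -> X x & forall x y, X x -> X y -> X (x `|` y)].

Definition directed D : Prop :=
  (exists d, D d) /\ forall d1 d2, D d1 -> D d2 -> exists2 d, D d & (d1 <= d) && (d2 <= d).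

Section PrimeIdeal.
Variable I : L -> Prop.
Hypothesis primeI : prime_ideal I.

Lemma prime_ideal0 : I \bot. Proof. by case: primeI. Qed.
Lemma prime_ideal_top : ~ I \top. Proof. by case: primeI => _ []. Qed.
Lemma prime_ideal_le x y : I y -> x <= y -> I x.
Proof. by case: primeI => _ [_ [+ _]]; apply. Qed.
Lemma prime_idealU x y : I x -> I y -> I (x `|` y).
Proof. by case: primeI => _ [_ [_ [+ _]]]; apply. Qed.
Lemma prime_idealI x y : I (x `&` y) -> I x \/ I y.
Proof. by case: primeI => _ [_ [_ [_]]]; apply. Qed.

End PrimeIdeal.

Definition maximal_prime P : Prop := forall K, prime_ideal K -> P ⊆ K -> K = P.

Lemma ideal_join_directed X D : lattice_ideal X -> directed D ->
  lattice_ideal (fun y => exists x d, [/\ X x, D d & y <= x `|` d]).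
Proof.
move=> [X0 Xle XU] [[d0 Dd0] Dup]; split.
- by exists \bot, d0; rewrite le0x.
- by move=> y t [x [d [Xx Dd le_td]]] le_yt; exists x, d; split=> //; apply: le_trans le_td.
- move=> y1 y2 [x1 [d1 [Xx1 Dd1 le1]]] [x2 [d2 [Xx2 Dd2 le2]]].
  have [d Dd /andP[le_d1 le_d2]] := Dup _ _ Dd1 Dd2.
  exists (x1 `|` x2), d; split; [exact: XU | by [] |].
  rewrite leUx (le_trans le1 (leU2 (leUl _ _) le_d1)).
  by rewrite (le_trans le2 (leU2 (leUr _ _) le_d2)).
Qed.

Lemma prime_directed J : prime_ideal J -> directed J.
Proof.
move=> primeJ; split; first by exists \bot; apply: prime_ideal0.
move=> x y Jx Jy; exists (x `|` y); first exact: prime_idealU.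
by rewrite leUl leUr.
Qed.

Lemma directed1 x : directed (eq x).
Proof. by split=> [|_ _ <- <-]; exists x; rewrite ?lexx. Qed.

Section MaximalIdeal.
Variables (X : L -> Prop) (a : L).

Definition avoiding Y : Prop := [/\ lattice_ideal Y, X ⊆ Y & ~ Y a].

Lemma bigcup_avoiding (F : set (set L)) :
  (forall Y, F Y -> (forall y, ~ Y y) \/ avoiding Y) -> total_on F subset ->
  forall Y0 y0, F Y0 -> Y0 y0 -> avoiding (\bigcup_(Y in F) Y)%classic.
Proof.
move=> FP Ftot Y0 y0 FY0 Y0y0.
have avF Y y : F Y -> Y y -> avoiding Y by move=> FY Yy; case: (FP Y FY) => // /(_ y).
have [[Y0bot _ _] XY0 _] := avF Y0 y0 FY0 Y0y0.
split; [split | by move=> x /XY0; exists Y0 | ].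
- by exists Y0.
- move=> x y [Y FY Yy] le_xy; exists Y => //.
  by case: (avF Y y FY Yy) => -[_ Ydown _] _ _; apply: Ydown Yy le_xy.
- move=> x y [Y FY Yx] [Y' FY' Y'y].
  have [YY'|Y'Y] := Ftot Y Y' FY FY'.
    exists Y' => //; case: (avF Y' y FY' Y'y) => -[_ _ Y'U] _ _.
    by apply: Y'U => //; apply: YY'.
  exists Y => //; case: (avF Y x FY Yx) => -[_ _ YU] _ _.
  by apply: YU => //; apply: Y'Y.
- by case=> Y FY Ya; case: (avF Y a FY Ya) => _ _; apply.
Qed.

Lemma ex_maximal_avoiding : avoiding X ->
  exists2 M, avoiding M & forall N, avoiding N -> M ⊆ N -> N ⊆ M.
Proof.
move=> avX.
(* The empty set is admitted so that the empty chain has an upper bound. *)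
pose P (Y : set L) := (forall y, ~ Y y) \/ avoiding Y.
have [M [PM maxM]] : exists M, P M /\ forall N, (M `<` N)%classic -> ~ P N.
  apply: Zorn_bigcup => F FP Ftot.
  have [[Y0 [y0 FY0 Y0y0]]|noF] := pselect (exists Y, exists2 y, F Y & Y y).
    by right; apply: bigcup_avoiding FP Ftot Y0 y0 FY0 Y0y0.
  by left=> y [Y FY Yy]; apply: noF; exists Y, y.
have avM : avoiding M.
  case: PM => // M0; have [[X0 _ _] _ _] := avX.
  exfalso; apply: (maxM X); last by right.
  by split=> [y /M0 // | XM]; apply: (M0 \bot); apply: XM.
exists M => // N avN MN; apply: contrapT => NM.
by apply: (maxM N); [split | right].
Qed.

End MaximalIdeal.

Lemma maximal_avoiding_prime X a M : avoiding X a M ->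
  (forall N, avoiding X a N -> M ⊆ N -> N ⊆ M) -> prime_ideal M.
Proof.
move=> [[M0 Mle MU] XM Ma] maxM.
have escape z : ~ M z -> exists2 m, M m & a <= m `|` z.
  move=> Mz; apply: contrapT => noa; apply: Mz.
  have idN := ideal_join_directed (And3 M0 Mle MU) (directed1 z).
  apply: (maxM _ (And3 idN _ _)); last by exists \bot, z; rewrite join0x.
  - by move=> x /XM Mx; exists x, z; rewrite leUl.
  - by move=> [m [_ [Mm <- le_a]]]; apply: noa; exists m.
  - by move=> m Mm; exists m, z; rewrite leUl.
do !split=> //; first by move=> Mtop; apply: Ma; apply: Mle Mtop _; rewrite lex1.
move=> x y Mxy; apply: contrapT => /not_orP[Mx My].
have [m Mm le_am] := escape x Mx; have [m' Mm' le_am'] := escape y My.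
apply: Ma; apply: Mle (MU _ _ (MU _ _ Mm Mm') Mxy) _.
apply: le_trans (_ : a <= (m `|` x) `&` (m' `|` y)) _; first by rewrite lexI le_am.
by rewrite joinIr; apply: leI2; apply: leU2; rewrite ?leUl ?leUr.
Qed.

Lemma prime_ideal_avoiding X a : lattice_ideal X -> ~ X a ->
  exists K, [/\ prime_ideal K, X ⊆ K & ~ K a].
Proof.
move=> idX Xa; have [M avM maxM] := ex_maximal_avoiding (And3 idX (fun _ => id) Xa).
by case: (avM) => _ XM Ma; exists M; split=> //; apply: maximal_avoiding_prime maxM.
Qed.

Lemma prime_separation a c : ~ a <= c -> exists K, [/\ prime_ideal K, K c & ~ K a].
Proof.
move=> le_ac; have idc : lattice_ideal (fun x => x <= c).
  split=> [|x y le_yc le_xy|x y le_xc le_yc]; first exact: le0x.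
    exact: le_trans le_xy le_yc.
  by rewrite leUx le_xc.
have [K [primeK cK Ka]] := prime_ideal_avoiding idc le_ac.
by exists K; split=> //; apply: cK.
Qed.

End LatticeIdeals.

(** * Identities of a pm-algebra *)

Section PmAlgebra.
Context {disp : Order.disp_t} {L : tbDistrLatticeType disp}.
Variables (star neg : L -> L).
Hypothesis hpm : is_pm_algebra star neg.

Local Notation f := (negstar star neg).

Let starP (x y : L) : x `&` y = \bot <-> y <= star x.
Proof. by case: hpm. Qed.

Let negI (x y : L) : neg (x `&` y) = neg x `|` neg y.
Proof. by case: hpm => _ []. Qed.

Let negK (x : L) : neg (neg x) = x.
Proof. by case: hpm => _ []. Qed.

Lemma meet_star (x : L) : x `&` star x = \bot.
Proof. exact/starP. Qed.

Lemma le_star (x y : L) : x <= y -> star y <= star x.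
Proof.
move=> le_xy; apply/starP/eqP; rewrite -lex0.
by apply: le_trans (leI2 le_xy (lexx _)) _; rewrite meet_star.
Qed.

Lemma le_starstar (x : L) : x <= star (star x).
Proof. by apply/starP; rewrite meetC meet_star. Qed.

Lemma star0 : star \bot = \top.
Proof. by apply/le_anti; rewrite lex1; apply/starP; rewrite meet0x. Qed.

Lemma star_eq1 (x : L) : star x = \top -> x = \bot.
Proof. by move=> h; rewrite -(meetx1 x) -h meet_star. Qed.

Lemma starU (x y : L) : star (x `|` y) = star x `&` star y.
Proof.
apply/le_anti; rewrite lexI !le_star ?leUl ?leUr //=.
apply/starP; rewrite meetUl.
have -> : x `&` (star x `&` star y) = \bot by rewrite meetA meet_star meet0x.
by rewrite meetCA meet_star meetx0 joinxx.
Qed.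

Lemma meet_starstar_eq0 (x y : L) : x `&` y = \bot -> x `&` star (star y) = \bot.
Proof. by move=> xy0; apply/starP/le_star/starP; rewrite meetC. Qed.

Lemma starI_starstar (x y : L) : star (x `&` y) = star (star (star x) `&` star (star y)).
Proof.
apply/le_anti/andP; split; last by apply/le_star/leI2; apply: le_starstar.
set t := star (x `&` y).
have t_x0 : t `&` y `&` x = \bot by rewrite meetAC -meetA meetC meet_star.
have t_y0 : t `&` star (star x) `&` y = \bot by rewrite meetAC meet_starstar_eq0.
by apply/starP; rewrite meetC meetA meet_starstar_eq0.
Qed.

Lemma starI_dense (d x : L) : star d = \bot -> star (d `&` x) = star x.
Proof.
move=> d_dense; rewrite starI_starstar d_dense star0 meet1x.
by apply/le_anti; rewrite le_starstar le_star ?le_starstar.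
Qed.

Lemma negU (x y : L) : neg (x `|` y) = neg x `&` neg y.
Proof. by rewrite -{1}(negK x) -{1}(negK y) -negI negK. Qed.

Lemma le_neg (x y : L) : x <= y -> neg y <= neg x.
Proof. by move=> /meet_idPl le_xy; rewrite -le_xy negI leUr. Qed.

Lemma neg0 : neg \bot = \top.
Proof. by apply/le_anti; rewrite lex1 -{1}(negK \top) le_neg ?le0x. Qed.

Lemma neg1 : neg \top = \bot.
Proof. by rewrite -neg0 negK. Qed.

Lemma join_neg_negstar (x : L) : x `|` neg (f x) = \top.
Proof. by rewrite -{1}(negK x) -negI meet_star neg0. Qed.

Lemma le_negstar (x y : L) : x <= y -> f x <= f y.
Proof. by move=> le_xy; apply/le_star/le_neg. Qed.

Lemma negstarK_le (x : L) : f (f x) <= x.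
Proof.
rewrite -[f (f x)]meetx1 -(join_neg_negstar x) meetUr.
by rewrite [_ `&` neg (f x)]meetC meet_star joinx0 leIr.
Qed.

Lemma le_iter_negstar n (x y : L) : x <= y -> iter n f x <= iter n f y.
Proof. by elim: n => //= n IHn /IHn; apply: le_negstar. Qed.

Lemma iter_negstar_le_parity m n (x : L) : (m <= n)%N -> odd m = odd n ->
  iter n f x <= iter m f x.
Proof.
move=> le_mn odd_mn.
have even_nm : odd (n - m) = false by rewrite oddB // odd_mn addbb.
have <- : ((n - m)./2.*2 + m)%N = n.
  by move: (odd_double_half (n - m)); rewrite even_nm add0n => ->; rewrite subnK.
elim: (n - m)./2 => // k IHk.
by rewrite doubleS !addSn; apply: le_trans IHk; apply: negstarK_le.
Qed.

Definition core (x : L) : L := x `&` f x.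

Lemma le_core (x y : L) : x <= y -> core x <= core y.
Proof. by move=> le_xy; apply: leI2 => //; apply: le_negstar. Qed.

Lemma negstar_core_le (x : L) : f (core x) <= core x.
Proof.
rewrite /core /negstar negI starU meetC; apply: leI2 => //; exact: negstarK_le.
Qed.

Lemma iter_core_le m n (x : L) : (m <= n)%N -> iter n f (core x) <= iter m f (core x).
Proof.
move=> /subnK <-; elim: (n - m)%N => // k IHk.
rewrite addSn iterSr; apply: le_trans IHk.
exact/le_iter_negstar/negstar_core_le.
Qed.

(* [core x] lies below both [x] and [f x], which covers both parities of [m]. *)
Lemma iter_core_le_iter m n (x : L) : (m <= n.+1)%N -> iter n f (core x) <= iter m f x.
Proof.
move=> le_mn; have [odd_m|odd_m] := boolP (odd m == odd n.+1).
  apply: le_trans (iter_negstar_le_parity x le_mn (eqP odd_m)).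
  by rewrite iterSr; apply/le_iter_negstar/leIr.
have le_mn' : (m <= n)%N.
  by move: le_mn odd_m; rewrite leq_eqVlt ltnS => /predU1P [->|//]; rewrite eqxx.
have odd_mn : odd m = odd n by move: odd_m => /=; case: (odd m); case: (odd n).
apply: le_trans (iter_negstar_le_parity x le_mn' odd_mn).
exact/le_iter_negstar/leIl.
Qed.

Lemma pm_range_iter_core n m (x : L) : pm_range star neg n ->
  iter n f (core x) <= iter m f (core x).
Proof.
move=> range_n; have [le_mn|le_nm] := leqP m n; first exact: iter_core_le.
suff -> : iter m f (core x) = iter n f (core x) by [].
move: le_nm => /ltnW /subnK <-; elim: (m - n)%N => // k IHk.
by rewrite addSn iterS IHk -iterS; exact/esym/range_n.
Qed.

Definition same_stars (x y : L) : Prop := star x = star y /\ f x = f y.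

Lemma same_stars_congruence : pm_congruence star neg same_stars.
Proof.
rewrite /same_stars /negstar; split; [by [] | split; [| split; [| split; [| split; [| split]]]]].
- by move=> x y [-> ->].
- by move=> x y z [-> ->] [-> ->].
- move=> x y u v [ex enx] [eu enu]; rewrite !negI !starU enx enu.
  by rewrite starI_starstar ex eu -starI_starstar.
- move=> x y u v [ex enx] [eu enu]; rewrite !negU !starU ex eu.
  by rewrite starI_starstar enx enu -starI_starstar.
- by move=> x y [ex _]; rewrite ex.
- by move=> x y [ex enx]; rewrite !negK.
Qed.

Lemma eq_congruence : pm_congruence star neg (@eq L).
Proof. by do ![split | move=> > -> //]. Qed.

Lemma regular_same_stars_eq (x y : L) : pm_regular star neg ->
  same_stars x y -> x = y.
Proof.
move=> regular.
have bot_class : exists a, forall b, same_stars a b <-> a = b.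
  exists \bot => b; split=> [[star_b _]|<-] //.
  by apply/esym/star_eq1; rewrite -star_b star0.
exact: (iffLR (regular _ _ same_stars_congruence eq_congruence bot_class x y)).
Qed.

(* Regularity is used only through this inequality. *)
Lemma regular_meet_le (x y : L) : pm_regular star neg ->
  x `&` neg (f x) <= y `|` star y.
Proof.
move=> regular; set c := y `|` star y.
have c_dense : star c = \bot by rewrite starU meet_star.
apply/join_idPl/regular_same_stars_eq => //; split.
  by rewrite starU; apply/meet_idPl; rewrite c_dense le0x.
rewrite /negstar negU meetC negI negK starI_dense //.
by rewrite starU meet_star.
Qed.

(** * Chains of prime ideals under zeta *)

Implicit Types (A B C D I J K M P Z : L -> Prop).

Local Notation zt := (zeta neg).

Lemma zeta_prime I : prime_ideal I -> prime_ideal (zt I).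
Proof.
move=> primeI; rewrite /zeta; split; first by rewrite neg0; apply: prime_ideal_top.
split; first by rewrite neg1; apply; apply: prime_ideal0.
split; first by move=> x y Iy le_xy Ix; apply/Iy/(prime_ideal_le primeI Ix)/le_neg.
split; first by move=> x y Ix Iy; rewrite negU => /(prime_idealI primeI) [].
move=> x y; rewrite negI => Ixy; apply: contrapT => /not_orP[/contrapT Ix /contrapT Iy].
exact: Ixy (prime_idealU primeI Ix Iy).
Qed.

Lemma zetaK I : zt (zt I) = I.
Proof. by apply/predeqP => a; rewrite /zeta negK; split=> [/contrapT | Ia /(_ Ia)]. Qed.

Lemma zeta_sub I K : I ⊆ K -> zt K ⊆ zt I.
Proof. by move=> IK a Ka /IK. Qed.

Lemma zeta_sub_sym I K : zt I ⊆ K -> zt K ⊆ I.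
Proof. by move=> IK; rewrite -[I]zetaK; apply: zeta_sub. Qed.

Lemma zeta_sub_negstar I K a : prime_ideal K -> zt I ⊆ K -> K a -> I (f a).
Proof.
move=> primeK IK Ka; apply: contrapT => Ifa; apply: (prime_ideal_top primeK).
rewrite -(join_neg_negstar a); apply: prime_idealU => //.
by apply: IK; rewrite /zeta negK.
Qed.

Lemma ex_prime_zeta_sub I D : prime_ideal I -> directed D -> (forall d, D d -> I (f d)) ->
  exists K, [/\ prime_ideal K, zt I ⊆ K & D ⊆ K].
Proof.
move=> primeI dirD IfD; have primezI := zeta_prime primeI.
have idzI : lattice_ideal (zt I).
  by split; [apply: prime_ideal0 | apply: prime_ideal_le | apply: prime_idealU].
have [|K [primeK sub_K _]] := prime_ideal_avoiding (ideal_join_directed idzI dirD) (a := \top).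
  move=> [z [d [zIz Dd le_top]]]; apply/zIz/(prime_ideal_le primeI (IfD d Dd)).
  have zd1 : z `|` d = \top by apply/le_anti; rewrite lex1.
  by apply/starP; rewrite meetC -negU zd1 neg1.
exists K; split=> // [z zIz|d Dd]; apply: sub_K.
  by case: dirD => -[d Dd] _; exists z, d; rewrite leUl.
by exists \bot, d; split; [apply: prime_ideal0 | | rewrite join0x].
Qed.

(* [zchain n I K]: primes I = M_0, ..., M_n = K with zt M_i ⊆ M_(i+1), i.e. M_i comparable
   with zt M_(i+1); so I, zt M_1, M_2, zt M_3, ... is a walk of length n to K or zt K. *)
Fixpoint zchain n I K : Prop :=
  if n is m.+1 then exists M, [/\ prime_ideal M, zt I ⊆ M & zchain m M K] else I = K.

Lemma zchain_iter_negstar n I K a : prime_ideal I -> zchain n I K -> K a -> I (iter n f a).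
Proof.
elim: n I => [|n IHn] I primeI /=; first by move=> ->.
by case=> M [primeM IM /IHn-/(_ primeM) Ma] /Ma; apply: zeta_sub_negstar.
Qed.

Lemma zchain_rcons n I K K' : zchain n I K -> zt K ⊆ K' -> prime_ideal K' ->
  zchain n.+1 I K'.
Proof.
elim: n I => [|n IHn] I /=; first by move=> -> KK' primeK'; exists K'.
by case=> M [primeM IM MK] KK' primeK'; exists M; split=> //; apply: IHn.
Qed.

Lemma zchain_rconsP n I K : prime_ideal I -> zchain n.+1 I K ->
  exists M, [/\ prime_ideal M, zchain n I M & zt M ⊆ K].
Proof.
elim: n I => [|n IHn] I primeI; first by case=> M [primeM IM /= <-]; exists I.
case=> M1 [primeM1 IM1 /(IHn _ primeM1) [M [primeM M1M MK]]].
by exists M; split=> //; exists M1.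
Qed.

Lemma ex_zchain n I D : prime_ideal I -> directed D -> (forall d, D d -> I (iter n f d)) ->
  exists K, [/\ prime_ideal K, zchain n I K & D ⊆ K].
Proof.
elim: n I => [|n IHn] I primeI dirD IfD; first by exists I.
pose fD t := exists2 d, D d & t = iter n f d.
have dir_fD : directed fD.
  case: dirD => -[d0 Dd0] Dup; split; first by exists (iter n f d0), d0.
  move=> _ _ [d1 Dd1 ->] [d2 Dd2 ->]; have [d Dd /andP[le1 le2]] := Dup _ _ Dd1 Dd2.
  by exists (iter n f d); [exists d | rewrite !le_iter_negstar].
have [M [primeM IM fDM]] : exists M, [/\ prime_ideal M, zt I ⊆ M & fD ⊆ M].
  by apply: ex_prime_zeta_sub => // _ [d Dd ->]; apply: IfD.
have [|K [primeK MK DK]] := IHn M primeM dirD; first by move=> d Dd; apply: fDM; exists d.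
by exists K; split=> //; exists M.
Qed.

Lemma walk_le m n I J : (m <= n)%N -> walk m I J -> walk n I J.
Proof.
move=> /subnK <-; elim: (n - m)%N => // k IHk /IHk walk_km.
by rewrite addSn; left.
Qed.

Lemma walk_zeta n I J : walk n I J -> walk n (zt I) (zt J).
Proof.
elim: n J => [|n IHn] J /=; first by move=> /predeqP ->.
case=> [/IHn|[K [primeK [/IHn zIK KJ]]]]; first by left.
right; exists (zt K); split; first exact: zeta_prime.
split=> //; by case: KJ => KJ; [right | left]; apply: zeta_sub.
Qed.

Lemma walk_zetaE n I J : walk n (zt I) (zt J) <-> walk n I J.
Proof. by split=> [/walk_zeta|/walk_zeta //]; rewrite !zetaK. Qed.

Lemma walk_cons n I M J : prime_ideal I -> comparable_pt I M -> prime_ideal M ->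
  walk n M J -> walk n.+1 I J.
Proof.
move=> primeI IM primeM; elim: n J => [|n IHn] J /=.
  by move=> /predeqP <-; right; exists I; split=> //; split.
case=> [/IHn|[K [primeK [/IHn IK KJ]]]]; first by left.
by right; exists K.
Qed.

Lemma lzeta_le_zetal k I J : lzeta_le neg k (zt I) J <-> lzeta_le neg k I J.
Proof.
rewrite /lzeta_le; split=> -[walkIJ|walkIJ].
- by right; apply/walk_zetaE; rewrite zetaK.
- by left; apply/walk_zetaE.
- by right; apply: walk_zeta.
- by left; rewrite -[J]zetaK; apply: walk_zeta.
Qed.

Lemma lzeta_le_zetar k I J : lzeta_le neg k I (zt J) <-> lzeta_le neg k I J.
Proof. by rewrite /lzeta_le zetaK; split; case; [right | left | right | left]. Qed.

Lemma lzeta_le_le m n I J : (m <= n)%N -> lzeta_le neg m I J -> lzeta_le neg n I J.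
Proof. by move=> le_mn [walkIJ|walkIJ]; [left | right]; apply: walk_le le_mn _. Qed.

Lemma lzeta_le_zeta_or k I I' J J' : I' = I \/ I' = zt I -> J' = J \/ J' = zt J ->
  lzeta_le neg k I' J' <-> lzeta_le neg k I J.
Proof.
case=> ->; case=> ->; [by [] | exact: lzeta_le_zetar | exact: lzeta_le_zetal |].
exact: iff_trans (lzeta_le_zetal _ _ _) (lzeta_le_zetar _ _ _).
Qed.

Lemma zchain_lzeta n I K : prime_ideal I -> zchain n I K -> lzeta_le neg n I K.
Proof.
elim: n I => [|n IHn] I primeI /=; first by move=> ->; left.
case=> M [primeM IM /(IHn _ primeM) MK].
have I_zM : comparable_pt I (zt M) by right; apply: zeta_sub_sym.
have walk_zM := walk_cons primeI I_zM (zeta_prime primeM).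
by case: MK => MK; [right | left]; apply: walk_zM; rewrite ?walk_zetaE // -[K]zetaK walk_zetaE.
Qed.

Definition zeta_if (b : bool) I := if b then zt I else I.

Lemma zchain_comparable p A K Z : prime_ideal A -> prime_ideal Z -> zchain p A K ->
  comparable_pt (zeta_if (odd p) K) Z ->
  exists q K', [/\ (q <= maxn p.+1 2)%N, zchain q A K' & Z = zeta_if (odd q) K'].
Proof.
move=> primeA primeZ chainK; have primezZ := zeta_prime primeZ.
have le_p1 : (p.+1 <= maxn p.+1 2)%N by rewrite leq_maxl.
have le_p : (p <= maxn p.+1 2)%N by apply: leq_trans le_p1.
case: p chainK le_p1 le_p => [|p] chainK le_p1 le_p.
  move: chainK => /= <- [AZ|ZA].
    exists 2, Z; split=> //; exists (zt A); split=> //; first exact: zeta_prime.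
    by exists Z; split=> //; rewrite zetaK.
  by exists 1, (zt Z); rewrite /= zetaK; split=> //; exists (zt Z); split=> // a /zeta_sub; apply.
have [K0 [_ chainK0 K0K]] := zchain_rconsP primeA chainK.
case odd_p : (odd p); rewrite /zeta_if oddS odd_p /= => -[KZ|ZK].
- exists p.+1, Z; split; [by [] | | by rewrite /zeta_if oddS odd_p].
  by apply: zchain_rcons chainK0 _ primeZ => a /K0K /KZ.
- exists p.+2, (zt Z); split; [by [] | | by rewrite /zeta_if !oddS odd_p zetaK].
  by apply: zchain_rcons chainK _ primezZ; apply: zeta_sub.
- exists p.+2, Z; split; [by [] | exact: zchain_rcons chainK KZ primeZ |].
  by rewrite /zeta_if !oddS odd_p.
- exists p.+1, (zt Z); split; [by [] | | by rewrite /zeta_if oddS odd_p zetaK].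
  by apply: zchain_rcons chainK0 _ primezZ; apply/zeta_sub => a /ZK /(zeta_sub_sym K0K).
Qed.

Lemma walk_zchain k A Z : prime_ideal A -> prime_ideal Z -> walk k A Z ->
  exists p K, [/\ (p <= k.+1)%N, zchain p A K & Z = zeta_if (odd p) K].
Proof.
move=> primeA; elim: k Z => [|k IHk] Z primeZ /=.
  by move=> /predeqP <-; exists 0, A.
case=> [/(IHk _ primeZ) [p [K [le_pk chainK eZ]]]|[M [primeM [walkM MZ]]]].
  by exists p, K; split=> //; apply: leqW.
have [p [K [le_pk chainK eM]]] := IHk _ primeM walkM; rewrite eM in MZ.
have [q [K' [le_q chainK' eZ]]] := zchain_comparable primeA primeZ chainK MZ.
by exists q, K'; split=> //; apply: leq_trans le_q _; rewrite geq_max ltnS le_pk.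
Qed.

Lemma zchain_cover q A K Z : prime_ideal A -> zchain q A K -> Z = K \/ Z = zt K ->
  exists m K', [/\ (m <= maxn q 1)%N, zchain m A K' & Z ⊆ K'].
Proof.
move=> primeA chainK [->|->]; first by exists q, K; rewrite leq_maxl.
case: q chainK => [/= <-|q /(zchain_rconsP primeA) [K0 [_ chainK0 K0K]]].
  by exists 1, (zt A); split=> //; exists (zt A); split=> //; apply: zeta_prime.
by exists q, K0; split; [rewrite leq_max leqnSn | | apply: zeta_sub_sym].
Qed.

Lemma lzeta_zchain n A Z : prime_ideal A -> prime_ideal Z -> lzeta_le neg n A Z ->
  exists m K, [/\ (m <= n.+1)%N, zchain m A K & Z ⊆ K].
Proof.
move=> primeA primeZ lzAZ.
have [p [K [le_pn chainK eZ]]] :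
    exists p K, [/\ (p <= n.+1)%N, zchain p A K & Z = K \/ Z = zt K].
  case: lzAZ => [/(walk_zchain primeA primeZ)|/(walk_zchain primeA (zeta_prime primeZ))].
    by case=> p [K [le_pn chainK ->]]; exists p, K; case: (odd p); split=> //; [right|left].
  case=> p [K [le_pn chainK eZ]]; exists p, K; split=> //; rewrite -[Z]zetaK eZ.
  by case: (odd p); rewrite /= ?zetaK; [left|right].
have [m [K' [le_m chainK' ZK']]] := zchain_cover primeA chainK eZ.
by exists m, K'; split=> //; apply: leq_trans le_m _; rewrite geq_max le_pn.
Qed.

(** * Range versus zeta-width *)

Lemma ex_zchain_iter_core n I x : prime_ideal I -> I (iter n.+1 f (core x)) ->
  exists q Z, [/\ (q <= n.+2)%N, prime_ideal Z, zchain q I Z & Z x].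
Proof.
move=> primeI Icore.
have [|K [primeK chainK Kcore]] := ex_zchain (n := n.+1) primeI (directed1 (core x)).
  by move=> _ <-.
have [Kx|Kfx] := prime_idealI primeK (Kcore _ erefl); first by exists n.+1, K.
have [|K' [primeK' KK' K'x]] := ex_prime_zeta_sub primeK (directed1 x); first by move=> _ <-.
by exists n.+2, K'; split=> //; [apply: zchain_rcons chainK KK' primeK' | apply: K'x].
Qed.

Lemma width_range n : zeta_width neg n -> pm_range star neg n.
Proof.
move=> width x; change (iter n f (core x) = iter n.+1 f (core x)).
apply/le_anti/andP; split; last exact: iter_core_le.
apply: contrapT.
move=> /prime_separation [I [primeI In1 In]].
have [q [Z [_ primeZ chainZ Zx]]] := ex_zchain_iter_core primeI In1.
have lzIZ := width I Z primeI primeZ (ex_intro _ q (zchain_lzeta primeI chainZ)).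
have [m [K [le_m chainK ZK]]] := lzeta_zchain primeI primeZ lzIZ.
apply/In/(prime_ideal_le primeI (zchain_iter_negstar primeI chainK (ZK x Zx))).
exact: iter_core_le_iter.
Qed.

Lemma maximal_zchain_lzeta q n I J : prime_ideal I -> maximal_prime I ->
  zchain q (zt I) J -> (q <= n.+1)%N -> lzeta_le neg n I J.
Proof.
move=> primeI maxI; case: q => [/= <- _|q /= [M [primeM zzIM chainMJ]] le_qn].
  by right; apply: (walk_le (leq0n n)); rewrite /= zetaK.
have eM : M = I by apply: maxI => // a Ia; apply: zzIM; rewrite zetaK.
rewrite eM in chainMJ; rewrite ltnS in le_qn.
exact: lzeta_le_le le_qn (zchain_lzeta primeI chainMJ).
Qed.

Lemma zchain_to_maximal n I J : prime_ideal I -> prime_ideal J -> maximal_prime J ->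
  (forall x, J x -> I (iter n f (core x))) -> exists2 q, (q <= n.+1)%N & zchain q I J.
Proof.
move=> primeI primeJ maxJ IJ.
pose D t := exists2 x, J x & t = core x.
have dirD : directed D.
  split; first by exists (core \bot), \bot; first exact: prime_ideal0.
  move=> _ _ [x1 Jx1 ->] [x2 Jx2 ->]; exists (core (x1 `|` x2)).
    by exists (x1 `|` x2) => //; apply: prime_idealU.
  by rewrite !le_core ?leUl ?leUr.
have [|K [primeK chainK DK]] := ex_zchain (n := n) primeI dirD.
  by move=> _ [x Jx ->]; apply: IJ.
have [JK|/existsPNP [x0 Jx0 Kx0]] := pselect (J ⊆ K).
  by exists n => //; rewrite -(maxJ K primeK JK).
have fJK x : J x -> K (f x).
  move=> Jx; have /(prime_idealI primeK) [Kx|Kf] : K (core (x `|` x0)).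
    by apply: DK; exists (x `|` x0) => //; apply: prime_idealU.
    by exfalso; apply/Kx0/(prime_ideal_le primeK Kx); rewrite leUr.
  exact/(prime_ideal_le primeK Kf)/le_negstar/leUl.
have [K' [primeK' KK' JK']] := ex_prime_zeta_sub primeK (prime_directed primeJ) fJK.
by exists n.+1 => //; rewrite -(maxJ K' primeK' JK'); apply: zchain_rcons chainK KK' primeK'.
Qed.

Lemma range_width_maximal n I J : pm_range star neg n -> prime_ideal I -> prime_ideal J ->
  maximal_prime I -> maximal_prime J -> (exists k, lzeta_le neg k I J) -> lzeta_le neg n I J.
Proof.
move=> range_n primeI primeJ maxI maxJ [k /lzeta_le_zetal lzIJ].
have primezI := zeta_prime primeI.
have [m [K [_ chainK JK]]] := lzeta_zchain primezI primeJ lzIJ.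
have [|q le_qn chainJ] := zchain_to_maximal (n := n) primezI primeJ maxJ.
  move=> x Jx; apply/(prime_ideal_le primezI (zchain_iter_negstar primezI chainK (JK x Jx))).
  by apply: le_trans (pm_range_iter_core m x range_n) _; apply/le_iter_negstar/leIl.
exact: maximal_zchain_lzeta primeI maxI chainJ le_qn.
Qed.

Section Regular.
Hypothesis regular : pm_regular star neg.

Lemma no_prime_chain3 A B C : prime_ideal A -> prime_ideal B -> prime_ideal C ->
  A ⊆ B -> B ⊆ C -> B ⊆ A \/ C ⊆ B.
Proof.
move=> primeA primeB primeC AB BC; apply: contrapT.
move=> /not_orP[/existsPNP[y By Ay] /existsPNP[x Cx Bx]].
have primezC := zeta_prime primeC.
have By_star : B (y `|` star y).
  apply: prime_idealU => //; apply: AB.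
  by have := prime_ideal0 primeA; rewrite -(meet_star y) => /(prime_idealI primeA) [].
have zC_fx : zt C (f x).
  have := prime_ideal0 primezC; rewrite -(meet_star (neg x)) => /(prime_idealI primezC) [] //.
  by rewrite /zeta negK.
have := prime_ideal_le primeB By_star (regular_meet_le x y regular).
by case/(prime_idealI primeB) => //; apply: zeta_sub BC _ zC_fx.
Qed.

Lemma maximal_prime_or_zeta P : prime_ideal P -> maximal_prime P \/ maximal_prime (zt P).
Proof.
move=> primeP; have [maxP|nmaxP] := pselect (maximal_prime P); [by left | right].
move=> K' primeK' zPK'; apply: contrapT => neK'; apply: nmaxP => K primeK PK.
apply: contrapT => neKP; have zK'P : zt K' ⊆ P by rewrite -[P]zetaK; apply: zeta_sub.
case: (no_prime_chain3 (zeta_prime primeK') primeP primeK zK'P PK) => [PzK'|KP].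
  by apply/neK'/predeqP => a; split=> [|/zPK' //]; rewrite -[K']zetaK; apply: zeta_sub PzK' a.
by apply/neKP/predeqP => a; split=> [/KP|/PK].
Qed.

Lemma range_width n : pm_range star neg n -> zeta_width neg n.
Proof.
move=> range_n I J primeI primeJ [k lzIJ].
have maximal_zeta P : prime_ideal P ->
    exists P', [/\ prime_ideal P', maximal_prime P' & P' = P \/ P' = zt P].
  move=> primeP; case: (maximal_prime_or_zeta primeP) => maxP.
    by exists P; split=> //; left.
  by exists (zt P); split=> //; [apply: zeta_prime | right].
have [I' [primeI' maxI' eI]] := maximal_zeta I primeI.
have [J' [primeJ' maxJ' eJ]] := maximal_zeta J primeJ.
apply/(lzeta_le_zeta_or _ eI eJ)/range_width_maximal => //.
by exists k; apply/(lzeta_le_zeta_or _ eI eJ).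
Qed.

End Regular.
End PmAlgebra.

Theorem corollary3p8 (disp : Order.disp_t) (L : tbDistrLatticeType disp)
  (star neg : L -> L) (hpm : is_pm_algebra star neg) (hreg : pm_regular star neg)
  (n : nat) :
  pm_range star neg n <-> zeta_width neg n.
Proof.
split=> [range_n | width_n]; first exact: range_width hpm hreg n range_n.
exact: width_range hpm n width_n.
Qed.
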